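(* Let $n_0\ge2$ be an integer, $s\in\mathbb{C}$ with $\sigma=\operatorname{Re}s>2$, and $\mathcal{D}_{n_0}\in\{\mathcal{X}_{n_0},\mathcal{Y}_{n_0},\mathcal{Z}_{n_0}\}$. Then $$|\mathcal{D}_{n_0}(s)|\le\frac{2(n_0-1)^{2-\sigma}}{\sigma-2}.$$
   Context: Pascal's rhombus consists of integers $r_{i,j}$ for $i\ge0$, $j\in\mathbb{Z}$, with $r_{0,j}=0$ for all $j$, $r_{1,0}=1$, $r_{1,j}=0$ for $j\ne0$, and $r_{i,j}=r_{i-1,j-1}+r_{i-1,j}+r_{i-1,j+1}+r_{i-2,j}$ for $i\ge2$. For $n\ge1$: $x(n)$ is the number of $j$ with $r_{n,j}$ odd; $y(n)$ the number of $j$ with $r_{2n-1,2j}$ odd; $z(n)$ the number of $j$ with $r_{2n,2j-1}$ odd. $\mathcal{X}_{n_0}(s)=\sum_{n\ge n_0}x(n)n^{-s}$, $\mathcal{Y}_{n_0}(s)=\sum_{n\ge n_0}y(n)n^{-s}$, $\mathcal{Z}_{n_0}(s)=\sum_{n\ge n_0}z(n)n^{-s}$. *)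

From Stdlib Require Import Reals ZArith List Lia.
From Coquelicot Require Import Coquelicot.
Import ListNotations.
Open Scope R_scope.

(* Pascal's rhombus r_{i,j}, i : nat, j : Z. *)
Fixpoint rh (i : nat) (j : Z) : Z :=
  match i with
  | O => 0%Z
  | S O => if Z.eqb j 0 then 1%Z else 0%Z
  | S ((S k) as i1) => (rh i1 (j - 1) + rh i1 j + rh i1 (j + 1) + rh k j)%Z
  end.

(* Support lemma: r_{i,j} = 0 whenever |j| > i; hence counting odd entries
   over a window containing [-i, i] counts all of them. *)
Lemma rh_support : forall i j, (Z.of_nat i < Z.abs j)%Z -> rh i j = 0%Z.
Proof.
  assert (H : forall i, (forall j, (Z.of_nat i < Z.abs j)%Z -> rh i j = 0%Z) /\
                        (forall j, (Z.of_nat (S i) < Z.abs j)%Z -> rh (S i) j = 0%Z)).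
  { induction i as [|i [IH1 IH2]].
    - split; intros j Hj; simpl; [reflexivity|].
      destruct (Z.eqb_spec j 0); [subst; simpl in Hj; lia | reflexivity].
    - split; [exact IH2|]. intros j Hj.
      change (rh (S (S i)) j) with
        (rh (S i) (j - 1) + rh (S i) j + rh (S i) (j + 1) + rh i j)%Z.
      rewrite !IH2 by lia. rewrite IH1 by lia. reflexivity. }
  intros i j Hj. exact (proj1 (H i) j Hj).
Qed.

Definition zrange (a b : Z) : list Z :=
  map (fun k => (a + Z.of_nat k)%Z) (seq 0 (Z.to_nat (b - a + 1))).

Definition zcount (f : Z -> bool) (a b : Z) : nat :=
  length (filter f (zrange a b)).

(* x(n) = #{j : r_{n,j} odd}; support of r_n is within [-n, n] *)
Definition xcnt (n : nat) : nat :=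
  zcount (fun j => Z.odd (rh n j)) (- Z.of_nat n) (Z.of_nat n).
(* y(n) = #{j : r_{2n-1,2j} odd}; |2j| <= 2n-1 forces j in [-n, n] *)
Definition ycnt (n : nat) : nat :=
  zcount (fun j => Z.odd (rh (2 * n - 1) (2 * j))) (- Z.of_nat n) (Z.of_nat n).
(* z(n) = #{j : r_{2n,2j-1} odd}; |2j-1| <= 2n forces j in [-n, n+1] *)
Definition zcnt (n : nat) : nat :=
  zcount (fun j => Z.odd (rh (2 * n) (2 * j - 1))) (- Z.of_nat n) (Z.of_nat n + 1).

(* n^{-s} = exp(-s ln n) for a positive integer n and complex s = sigma + i t:
   n^{-sigma} (cos (t ln n) - i sin (t ln n)). *)
Definition npow_neg (n : nat) (s : C) : C :=
  (exp (- Re s * ln (INR n)) * cos (Im s * ln (INR n)),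
   - (exp (- Re s * ln (INR n)) * sin (Im s * ln (INR n)))).

(* general term of the Dirichlet series sum_{n >= n0} D(n) n^{-s}, reindexed n = n0 + k *)
Definition dterm (D : nat -> nat) (n0 : nat) (s : C) (k : nat) : C :=
  Cmult (RtoC (INR (D (n0 + k)%nat))) (npow_neg (n0 + k) s).

(** Every count D(n) is at most 2n, because row [i] of the rhombus vanishes
    for [|j| >= i]; hence the Dirichlet series is dominated by
    [2 * sum n^(1-sigma)].  Writing [a = sigma - 2], the elementary bound
    [a n^(-a-1) <= (n-1)^(-a) - n^(-a)] makes this majorant telescope, and
    the telescoped sum from [n0] is [(2/a) (n0-1)^(-a)]. *)
From Stdlib Require Import Reals ZArith List Lia Lra.
From Coquelicot Require Import Coquelicot.
Open Scope R_scope.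

(* Sharper than [rh_support] by one: without the boundary [|j| = i], x(n)
   would only be bounded by 2n + 1. *)
Lemma rh_eq0 (i : nat) (j : Z) : (Z.of_nat i <= Z.abs j)%Z -> rh i j = 0%Z.
Proof.
  revert j.
  enough (H : forall i, (forall j, (Z.of_nat i <= Z.abs j)%Z -> rh i j = 0%Z) /\
                        (forall j, (Z.of_nat (S i) <= Z.abs j)%Z -> rh (S i) j = 0%Z))
    by exact (proj1 (H i)).
  clear i; induction i as [|i [IH1 IH2]].
  - split; intros j Hj; [reflexivity|]; simpl.
    destruct (Z.eqb_spec j 0); [subst; simpl in Hj; lia | reflexivity].
  - split; [exact IH2|]; intros j Hj.
    change (rh (S (S i)) j) with
      (rh (S i) (j - 1) + rh (S i) j + rh (S i) (j + 1) + rh i j)%Z.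
    rewrite !IH2, IH1 by lia; reflexivity.
Qed.

Lemma rh_odd_abs_lt (i : nat) (j : Z) : Z.odd (rh i j) = true -> (Z.abs j < Z.of_nat i)%Z.
Proof.
  intros Hodd; destruct (Z_lt_le_dec (Z.abs j) (Z.of_nat i)) as [Hlt|Hle]; [exact Hlt|].
  rewrite rh_eq0 in Hodd by exact Hle; discriminate.
Qed.

Lemma in_zrange (a b j : Z) : In j (zrange a b) <-> (a <= j <= b)%Z.
Proof.
  unfold zrange; rewrite in_map_iff; split.
  - intros [k [<- Hk]]; apply in_seq in Hk; lia.
  - intros Hj; exists (Z.to_nat (j - a)); split; [lia|]; apply in_seq; lia.
Qed.

Lemma NoDup_zrange (a b : Z) : NoDup (zrange a b).
Proof.
  apply NoDup_map_NoDup_ForallPairs; [intros x y _ _ Hxy; lia | apply seq_NoDup].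
Qed.

Lemma length_zrange (a b : Z) : length (zrange a b) = Z.to_nat (b - a + 1).
Proof. unfold zrange; rewrite length_map, length_seq; reflexivity. Qed.

Lemma zcount_le (f : Z -> bool) (a b a' b' : Z) :
  (forall j, (a <= j <= b)%Z -> f j = true -> (a' <= j <= b')%Z) ->
  (zcount f a b <= Z.to_nat (b' - a' + 1))%nat.
Proof.
  intros Hf; unfold zcount; rewrite <- length_zrange.
  apply NoDup_incl_length; [apply NoDup_filter, NoDup_zrange|].
  intros j Hj; apply filter_In in Hj as [Hj Hfj]; apply in_zrange in Hj.
  apply in_zrange, Hf; assumption.
Qed.

Lemma rhombus_count_le (D : nat -> nat) (n : nat) :
  (D = xcnt \/ D = ycnt \/ D = zcnt) -> (D n <= 2 * n)%nat.
Proof.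
  intros HD; apply (Nat.le_trans _ (Z.to_nat (Z.of_nat n - (1 - Z.of_nat n) + 1))); [|lia].
  destruct HD as [-> | [-> | ->]]; apply zcount_le;
    intros j _ Hj; apply rh_odd_abs_lt in Hj; lia.
Qed.

Lemma Cmod_npow_neg (n : nat) (s : C) : Cmod (npow_neg n s) = Rpower (INR n) (- Re s).
Proof.
  unfold npow_neg, Cmod, Rpower; simpl.
  set (E := exp (- Re s * ln (INR n))); set (t := Im s * ln (INR n)).
  replace (E * cos t * (E * cos t * 1) + - (E * sin t) * (- (E * sin t) * 1)) with (E²)
    by (pose proof (sin2_cos2 t); unfold Rsqr in *; nra).
  apply sqrt_Rsqr; left; apply exp_pos.
Qed.

Lemma Cmod_dterm_le (D : nat -> nat) (n0 : nat) (s : C) (k : nat) :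
  (1 <= n0)%nat -> (D = xcnt \/ D = ycnt \/ D = zcnt) ->
  Cmod (dterm D n0 s k) <= 2 * Rpower (INR (n0 + k)) (1 - Re s).
Proof.
  intros Hn0 HD; unfold dterm; set (n := (n0 + k)%nat).
  assert (Hn : 0 < INR n) by (apply lt_0_INR; unfold n; lia).
  assert (HDn : INR (D n) <= 2 * INR n).
  { replace (2 * INR n) with (INR (2 * n)) by (rewrite mult_INR; simpl; ring).
    apply le_INR, rhombus_count_le, HD. }
  rewrite Cmod_mult, Cmod_R, Rabs_pos_eq, Cmod_npow_neg by apply pos_INR.
  replace (1 - Re s) with (1 + - Re s) by ring.
  rewrite Rpower_plus, Rpower_1 by exact Hn.
  pose proof (exp_pos (- Re s * ln (INR n))); unfold Rpower; nra.
Qed.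

Lemma Rinv_le_ln_sub_ln_pred (x : R) : 1 < x -> / x <= ln x - ln (x - 1).
Proof.
  intros Hx.
  assert (Hq : 0 < (x - 1) / x) by (apply Rdiv_lt_0_compat; lra).
  pose proof (exp_ineq1_le (ln ((x - 1) / x))) as Hexp.
  rewrite exp_ln, ln_div in Hexp by lra.
  replace ((x - 1) / x) with (1 - / x) in Hexp by (field; lra); lra.
Qed.

Lemma Rpower_pred_sub_ge (a x : R) : 0 < a -> 1 < x ->
  a * Rpower x (- (a + 1)) <= Rpower (x - 1) (- a) - Rpower x (- a).
Proof.
  intros Ha Hx; set (P := Rpower x (- a)).
  assert (HP : 0 < P) by apply exp_pos.
  assert (Hpred : Rpower (x - 1) (- a) = P * exp (a * (ln x - ln (x - 1)))).
  { unfold P, Rpower; rewrite <- exp_plus; f_equal; ring. }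
  assert (Hsucc : Rpower x (- (a + 1)) = P * / x).
  { rewrite Ropp_plus_distr, Rpower_plus, (Rpower_Ropp x 1), Rpower_1 by lra; reflexivity. }
  pose proof (exp_ineq1_le (a * (ln x - ln (x - 1)))) as Hexp.
  pose proof (Rinv_le_ln_sub_ln_pred x Hx) as Hgap.
  assert (a * / x <= a * (ln x - ln (x - 1))) by (apply Rmult_le_compat_l; lra).
  rewrite Hpred, Hsucc; nra.
Qed.

Lemma is_series_telescoping_majorant {K : AbsRing} {V : CompleteNormedModule K}
    (u : nat -> V) (g : nat -> R) :
  (forall k, 0 <= g k) -> (forall k, norm (u k) <= g k - g (S k)) ->
  exists l, is_series u l /\ norm l <= g O.
Proof.
  intros Hg Hu; set (v := fun k => g k - g (S k)).
  assert (Hv0 : forall k, 0 <= v k) by (intros k; eapply Rle_trans; [apply (norm_ge_0 (u k)) | apply Hu]).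
  assert (Hsum_v : forall N, sum_n v N = g O - g (S N)).
  { induction N as [|N IH]; [apply sum_O|].
    rewrite sum_Sn, IH; unfold v; simpl; change plus with Rplus; ring. }
  assert (Hsum_u : forall N, norm (sum_n u N) <= g O).
  { intros N; eapply Rle_trans; [exact (@norm_sum_n_m K V u 0 N)|].
    eapply Rle_trans; [apply (sum_n_m_le _ v), Hu|].
    fold (sum_n v N); rewrite Hsum_v; pose proof (Hg (S N)); lra. }
  assert (Hv : ex_series v).
  { destruct (ex_finite_lim_seq_incr (sum_n v) (g O)) as [lv Hlv].
    - intros N; rewrite sum_Sn; pose proof (Hv0 (S N)); simpl; change plus with Rplus; lra.
    - intros N; rewrite Hsum_v; pose proof (Hg (S N)); lra.
    - exists lv; exact Hlv. }
  destruct (ex_series_le u v Hu Hv) as [l Hl].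
  exists l; split; [exact Hl|].
  assert (Hnorm : is_lim_seq (fun N => norm (sum_n u N)) (norm l))
    by (eapply filterlim_comp; [exact Hl | apply filterlim_norm]).
  exact (is_lim_seq_le _ (fun _ => g O) _ _ Hsum_u Hnorm (is_lim_seq_const _)).
Qed.

Theorem lemmaI3 (n0 : nat) (s : C) (D : nat -> nat) :
  (2 <= n0)%nat -> 2 < Re s -> (D = xcnt \/ D = ycnt \/ D = zcnt) ->
  exists l : C, is_series (dterm D n0 s) l /\
    Cmod l <= 2 * Rpower (INR (n0 - 1)) (2 - Re s) / (Re s - 2).
Proof.
  intros Hn0 Hs HD; set (a := Re s - 2).
  assert (Ha : 0 < a) by (unfold a; lra).
  set (g := fun k => 2 / a * Rpower (INR (n0 + k) - 1) (- a)).
  assert (Hn : forall k, 1 < INR (n0 + k))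
    by (intros k; rewrite <- INR_1; apply lt_INR; lia).
  destruct (is_series_telescoping_majorant (dterm D n0 s) g) as [l [Hl Hlg]].
  - intros k; unfold g; pose proof (exp_pos (- a * ln (INR (n0 + k) - 1))).
    unfold Rpower; apply Rmult_le_pos; [apply Rdiv_le_0_compat|]; lra.
  - intros k; eapply Rle_trans; [apply Cmod_dterm_le; [lia | exact HD]|]; unfold g.
    replace (INR (n0 + S k) - 1) with (INR (n0 + k)) by (rewrite Nat.add_succ_r, S_INR; ring).
    replace (1 - Re s) with (- (a + 1)) by (unfold a; ring).
    pose proof (Rpower_pred_sub_ge a _ Ha (Hn k)) as Htel.
    apply (Rmult_le_reg_l (a / 2)); [lra|].
    replace (a / 2 * (2 * Rpower (INR (n0 + k)) (- (a + 1))))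
      with (a * Rpower (INR (n0 + k)) (- (a + 1))) by (field; lra).
    eapply Rle_trans; [exact Htel | right; field; lra].
  - exists l; split; [exact Hl|].
    unfold g in Hlg; rewrite Nat.add_0_r in Hlg; rewrite minus_INR, INR_1 by lia.
    replace (2 - Re s) with (- a) by (unfold a; ring); fold a.
    eapply Rle_trans; [exact Hlg | right; field; lra].
Qed.
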